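(* For each $n\in\mathbf{N}$ let $W_n = (w_{ij}^{(n)})_{i,j=1}^n$ be a random $n\times n$ Hermitian matrix whose upper triangular entries are jointly independent with mean zero, and assume: there are $\eta_n>0$ with $\eta_n\to0$ and $|w_{ij}^{(n)}|\le\eta_n$ for all $n,i,j$; there is a finite $C\ge0$ with $\sum_{j=1}^n \operatorname{Var}[w_{ij}^{(n)}]\le C$ for all $n$ and $i$; and \[ \lim_{n\to\infty} \frac{1}{n}\sum_{i=1}^n \biggl| \sum_{j=1}^n \Bigl( \operatorname{Var}\bigl[w_{ij}^{(n)}\bigr] - \frac{1}{n} \Bigr) \biggr| = 0. \] Then for any finite tree $T$, \[ \lim_{n\to\infty} \frac{1}{n} \sum_{F \in I(T,n)} P(T,F) = 1. \]
   Context: Graphs are undirected, may have loops, and have no multiple edges. For a finite graph $G$ and $n\in\mathbf{N}$, $I(G,n)$ is the set of injections $V(G)\to\{1,\ldots,n\}$. For $F\in I(G,n)$, $P(G,F) := \prod_{e\in E(G)} \operatorname{Var}\bigl[w^{(n)}_{F(u_e)F(v_e)}\bigr]$, where $u_e,v_e$ are the ends of $e$; the empty product is $1$. $\operatorname{Var}[w]=\mathbf{E}|w-\mathbf{E}w|^2$. *)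

From HB Require Import structures.
From mathcomp Require Import all_boot all_order all_algebra.
From mathcomp Require Import all_classical all_reals all_analysis.
Set Implicit Arguments. Unset Strict Implicit. Unset Printing Implicit Defensive.
Import Order.TTheory GRing.Theory Num.Theory.
Local Open Scope ring_scope.
Local Open Scope classical_set_scope.

(* A finite graph on vertex type V is given by a symmetric adjacency relation
   e (loops allowed: e v v).  Its edges are the unordered pairs {u,v} with e u v;
   we enumerate each edge exactly once as the ordered pair (u,v) with e u v and
   enum_rank u <= enum_rank v, whose first/second components are the two ends. *)
Definition is_edge (V : finType) (e : rel V) (p : V * V) : bool :=
  e p.1 p.2 && (enum_rank p.1 <= enum_rank p.2)%N.

Definition is_tree (V : finType) (e : rel V) : Prop :=
  [/\ (0 < #|V|)%N,
      symmetric e,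
      irreflexive e,
      (forall x y : V, connect e x y)
    & (forall c : seq V, (3 <= size c)%N -> ~ ucycle e c)].

(* I(G,n): injections V -> {1..n}; {1..n} is modelled by 'I_n = {0..n-1}. *)
Definition injections (V : finType) (n : nat) : pred {ffun V -> 'I_n} :=
  fun F => injectiveb F.

(* P(G,F) = prod over edges of sigma (F u_e) (F v_e), sigma = variance profile. *)
Definition Pweight (R : realType) (V : finType) (e : rel V) (n : nat)
  (sigma : 'I_n -> 'I_n -> R) (F : {ffun V -> 'I_n}) : R :=
  \prod_(p : V * V | is_edge e p) sigma (F p.1) (F p.2).

(* Var[w] = E |w - E w|^2, for w = re + i im. *)
Definition varC d (T : measurableType d) (R : realType) (P : probability T R)
  (re im : T -> R) : R :=
  fine ('E_P[fun t => ((re t - fine 'E_P[re]) ^+ 2 + (im t - fine 'E_P[im]) ^+ 2)%R])%E.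

Definition absC (R : realType) (x y : R) : R := Num.sqrt (x ^+ 2 + y ^+ 2).

(* Joint (mutual) independence of a finite family of R^2-valued (= C-valued)
   random variables X k, k in K: the product rule for every subfamily J and
   every choice of measurable sets of R*R (product sigma-algebra = Borel(C)). *)
Definition mutually_independent d (T : measurableType d) (R : realType)
  (P : probability T R) (I : finType) (K : {set I}) (X : I -> T -> R * R) : Prop :=
  forall (J : {set I}) (A : I -> set (R * R)),
    J \subset K -> (forall k, measurable (A k)) ->
    P [set t | forall k, k \in J -> A k (X k t)] =
    (\prod_(k in J) P (X k @^-1` A k))%E.

From HB Require Import structures.
From mathcomp Require Import all_boot all_order all_algebra.
From mathcomp Require Import all_classical all_reals all_analysis.
From mathcomp Require Import ring.
Import Order.TTheory GRing.Theory Num.Theory.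
Import numFieldTopology.Exports numFieldNormedType.Exports.
Set Implicit Arguments. Unset Strict Implicit. Unset Printing Implicit Defensive.
Local Open Scope ring_scope.
Local Open Scope classical_set_scope.

(* Order the vertices of the tree as v_0, ..., v_k so that each v_m with m > 0
   has exactly one neighbour v_(par m) among v_0, ..., v_(m-1); any search order
   of a tree has this property by acyclicity.  Then P(T,F) is the product of the
   variances sigma(F v_(par m), F v_m), and we add one leaf at a time.  Summing
   the label of the new leaf over the labels not yet used gives the row sum of
   sigma at its parent's label, which is 1 up to an error that vanishes on
   average by hypothesis, minus at most k+1 collision terms of size eta_n^2.
   Both errors are multiplied by at most C^k, since for each fixed label of one
   vertex the weights of all labellings of a tree with k+1 vertices add up to at
   most C^k. *)

Section CenteredVariance.
Context d (T : measurableType d) (R : realType) (P : probability T R).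
Implicit Types X Y : {RV P >-> R}.

Lemma varC_centered X Y : ('E_P[X] = 0)%E -> ('E_P[Y] = 0)%E ->
  varC P X Y = fine ('E_P[fun t => (X t ^+ 2 + Y t ^+ 2)%R])%E.
Proof.
move=> EX EY; rewrite /varC EX EY; congr (fine ('E_P[_]))%E.
by apply/funext => t /=; rewrite !subr0.
Qed.

Lemma varC_ge0_le X Y (eta : R) : ('E_P[X] = 0)%E -> ('E_P[Y] = 0)%E ->
  (forall t, absC (X t) (Y t) <= eta) -> 0 <= varC P X Y <= eta ^+ 2.
Proof.
move=> EX EY le_eta; rewrite varC_centered //.
set f := fun t => X t ^+ 2 + Y t ^+ 2.
have f_ge0 t : 0 <= f t by rewrite addr_ge0 // sqr_ge0.
have f_le t : f t <= eta ^+ 2.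
  have eta_ge0 : 0 <= eta := le_trans (sqrtr_ge0 _) (le_eta t).
  rewrite -(sqr_sqrtr (f_ge0 t)) ler_pXn2r ?nnegrE ?sqrtr_ge0 //; exact: le_eta.
have Ef_ge0 : (0 <= 'E_P[f])%E by apply: expectation_ge0.
have Ef_le : ('E_P[f] <= (eta ^+ 2)%:E)%E.
  rewrite -(expectation_cst P); apply: expectation_le => //.
  - apply: measurable_realfun.measurable_funD;
      apply: measurable_realfun.measurable_funX; exact: measurable_funPT.
  - by move=> t; rewrite /= sqr_ge0.
  - exact: aeW.
have Ef_fin : ('E_P[f] \is a fin_num)%E.
  by rewrite ge0_fin_numE // (le_lt_trans Ef_le) ?ltry.
by rewrite fine_ge0 //= -lee_fin fineK.
Qed.

Lemma varC_conj X Y X' Y' :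
  ('E_P[X] = 0)%E -> ('E_P[Y] = 0)%E -> ('E_P[X'] = 0)%E -> ('E_P[Y'] = 0)%E ->
  (forall t, X' t = X t /\ Y' t = - Y t) -> varC P X' Y' = varC P X Y.
Proof.
move=> EX EY EX' EY' conj; rewrite !varC_centered //; congr (fine ('E_P[_]))%E.
by apply/funext => t; have [-> ->] := conj t; rewrite sqrrN.
Qed.

End CenteredVariance.

Section FfunRcons.
Variables (T : finType) (k : nat).
Implicit Types (g : {ffun 'I_k -> T}) (x : T).

Definition ffun_rcons g x : {ffun 'I_k.+1 -> T} :=
  [ffun i => if unlift ord_max i is Some i' then g i' else x].

Lemma ffun_rcons_lift g x i : ffun_rcons g x (lift ord_max i) = g i.
Proof. by rewrite ffunE liftK. Qed.

Lemma ffun_rcons_max g x : ffun_rcons g x ord_max = x.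
Proof. by rewrite ffunE unlift_none. Qed.

Lemma ffun_rcons_widen g x i : ffun_rcons g x (widen_ord (leqnSn k) i) = g i.
Proof.
have -> : widen_ord (leqnSn k) i = lift ord_max i by apply: val_inj; rewrite [RHS]lift_max.
exact: ffun_rcons_lift.
Qed.

Lemma sum_ffun_rcons (M : nmodType) (F : {ffun 'I_k.+1 -> T} -> M) :
  \sum_f F f = \sum_g \sum_x F (ffun_rcons g x).
Proof.
rewrite pair_big /=.
pose split f : {ffun 'I_k -> T} * T := ([ffun i => f (lift ord_max i)], f ord_max).
rewrite (reindex (fun p => ffun_rcons p.1 p.2)) //=.
exists split => [[g x] _ | f _]; rewrite /split /=.
  by congr pair; [apply/ffunP => i; rewrite ffunE ffun_rcons_lift | rewrite ffun_rcons_max].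
apply/ffunP => i; rewrite ffunE; case: unliftP => [i' ->|->] //.
by rewrite ffunE.
Qed.

Lemma injectiveb_ffun_rcons g x :
  injectiveb (ffun_rcons g x) = injectiveb g && (x \notin codom g).
Proof.
apply/injectiveP/andP => [inj_gx | [/injectiveP inj_g gx]].
  split.
    by apply/injectiveP => i j eq_ij; apply: (@lift_inj _ ord_max); apply: inj_gx;
      rewrite !ffun_rcons_lift.
  apply/codomP => -[i xgi]; have /eqP := neq_lift ord_max i; apply.
  by apply: inj_gx; rewrite ffun_rcons_lift ffun_rcons_max.
move=> i j; case: (unliftP ord_max i) => [i' ->|->]; case: (unliftP ord_max j) => [j' ->|->];
  rewrite ?ffun_rcons_lift ?ffun_rcons_max //.
- by move/inj_g ->.
- by move=> gi; case/negP: gx; rewrite -gi codom_f.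
- by move=> gj; case/negP: gx; rewrite gj codom_f.
Qed.

End FfunRcons.

Lemma ffun_rcons_inord (T : finType) k (g : {ffun 'I_k.+1 -> T}) x m :
  (m <= k)%N -> ffun_rcons g x (inord m) = g (inord m).
Proof.
move=> le_mk; have -> : inord m = lift ord_max (inord m : 'I_k.+1).
  by apply: val_inj; rewrite [RHS]lift_max /= !inordK // ltnW.
exact: ffun_rcons_lift.
Qed.

Lemma ler_sum_pred (R : numDomainType) (I : finType) (P : pred I) (F : I -> R) :
  (forall i, 0 <= F i) -> \sum_(i | P i) F i <= \sum_i F i.
Proof. by move=> F_ge0; rewrite [leRHS](bigID P) /= lerDl sumr_ge0. Qed.

Section TreeWeight.
Variables (R : realFieldType) (n : nat) (par : nat -> nat) (s : 'I_n -> 'I_n -> R).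
Hypothesis par_lt : forall m, (0 < m)%N -> (par m < m)%N.

Definition tree_weight k (g : {ffun 'I_k.+1 -> 'I_n}) : R :=
  \prod_(m < k.+1 | (0 < m)%N) s (g (inord (par m))) (g m).

Lemma tree_weight_rcons k (g : {ffun 'I_k.+1 -> 'I_n}) j :
  tree_weight (ffun_rcons g j) = tree_weight g * s (g (inord (par k.+1))) j.
Proof.
rewrite /tree_weight big_mkcond big_ord_recr /= -big_mkcond /=.
rewrite ffun_rcons_max ffun_rcons_inord; last by rewrite -ltnS par_lt.
congr (_ * _).
apply: eq_bigr => m m_gt0; rewrite ffun_rcons_widen ffun_rcons_inord //.
exact: ltn_trans (par_lt m_gt0) (ltn_ord m).
Qed.

Lemma tree_weight1 (g : {ffun 'I_1 -> 'I_n}) : tree_weight g = 1.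
Proof. by rewrite /tree_weight big1 // => m; rewrite (ord1 m). Qed.

Lemma sum_inj_tree_weight_rcons k :
  \sum_(f : {ffun 'I_k.+2 -> 'I_n} | injectiveb f) tree_weight f =
    \sum_(g : {ffun 'I_k.+1 -> 'I_n} | injectiveb g) tree_weight g
  + \sum_(g : {ffun 'I_k.+1 -> 'I_n} | injectiveb g)
      tree_weight g * (\sum_j s (g (inord (par k.+1))) j - 1)
  - \sum_(g : {ffun 'I_k.+1 -> 'I_n} | injectiveb g)
      tree_weight g * \sum_(j in codom g) s (g (inord (par k.+1))) j.
Proof.
rewrite -big_split -sumrB big_mkcond sum_ffun_rcons [RHS]big_mkcond.
apply: eq_bigr => g _.
under eq_bigr => j _ do rewrite injectiveb_ffun_rcons tree_weight_rcons.
case: (injectiveb g) => /=; last by rewrite big1.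
rewrite -big_mkcond -mulr_sumr [X in _ = _ + _ * (X - 1) - _](bigID (mem (codom g))) /=.
by ring.
Qed.

Section Bounds.
Variable C : R.
Hypotheses (s_ge0 : forall i j, 0 <= s i j) (s_sym : forall i j, s i j = s j i).
Hypotheses (row_le : forall i, \sum_j s i j <= C) (C_ge0 : 0 <= C).

Lemma tree_weight_ge0 k (g : {ffun 'I_k.+1 -> 'I_n}) : 0 <= tree_weight g.
Proof. by apply: prodr_ge0 => m _; apply: s_ge0. Qed.

Lemma sum_tree_weight_at k (a : 'I_k.+1) i :
  \sum_(g : {ffun 'I_k.+1 -> 'I_n} | g a == i) tree_weight g <= C ^+ k.
Proof.
elim: k a i => [|k IHk] a i.
  rewrite (ord1 a) (big_pred1 [ffun=> i]) => [|g]; last first.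
    apply/eqP/eqP => [gi | ->]; last by rewrite ffunE.
    by apply/ffunP => x; rewrite ffunE (ord1 x).
  by rewrite tree_weight1.
rewrite big_mkcond sum_ffun_rcons.
set p : 'I_k.+1 := inord (par k.+1).
under eq_bigr => g _ do under eq_bigr => j _ do rewrite tree_weight_rcons.
case: (unliftP ord_max a) => [a' ->|->].
  under eq_bigr => g _ do under eq_bigr => j _ do rewrite ffun_rcons_lift.
  apply: (@le_trans _ _ (\sum_(g : {ffun 'I_k.+1 -> 'I_n} | g a' == i) tree_weight g * C)).
    rewrite [X in _ <= X]big_mkcond; apply: ler_sum => g _.
    case: ifP => _; last by rewrite big1.
    by rewrite -mulr_sumr ler_wpM2l ?tree_weight_ge0.
  by rewrite -mulr_suml exprSr ler_wpM2r.
under eq_bigr => g _ do under eq_bigr => j _ do rewrite ffun_rcons_max.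
under eq_bigr => g _ do rewrite -big_mkcond big_pred1_eq s_sym.
rewrite (partition_big (fun g : {ffun 'I_k.+1 -> 'I_n} => g p) predT) //=.
apply: (@le_trans _ _ (\sum_i' s i i' * C ^+ k)); last first.
  by rewrite -mulr_suml exprS ler_wpM2r ?exprn_ge0.
apply: ler_sum => i' _.
rewrite (eq_bigr (fun g => tree_weight g * s i i')) => [|g /eqP <-] //.
by rewrite -mulr_suml mulrC ler_wpM2l.
Qed.

Lemma avg_tree_weight_le k :
  n%:R^-1 * \sum_(g : {ffun 'I_k.+1 -> 'I_n}) tree_weight g <= C ^+ k.
Proof.
have [n0|n_neq0] := eqVneq (n%:R : R) 0; first by rewrite n0 invr0 mul0r exprn_ge0.
rewrite ler_pdivrMl ?lt0r ?n_neq0 ?ler0n //.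
rewrite (partition_big (fun g : {ffun 'I_k.+1 -> 'I_n} => g ord0) predT) //=.
apply: (@le_trans _ _ (\sum_(i < n) C ^+ k)).
  by apply: ler_sum => i _; apply: sum_tree_weight_at.
by rewrite sumr_const card_ord mulr_natl.
Qed.

Lemma row_deviation_bound k (p : 'I_k.+1) :
  `| n%:R^-1 * \sum_(g : {ffun 'I_k.+1 -> 'I_n} | injectiveb g)
        tree_weight g * (\sum_j s (g p) j - 1) |
  <= C ^+ k * (n%:R^-1 * \sum_i `| \sum_j (s i j - n%:R^-1) |).
Proof.
have row_sub1 i : \sum_j s i j - 1 = \sum_j (s i j - n%:R^-1).
  have n_gt0 : (0 < n)%N by case: i => i /= /(leq_ltn_trans (leq0n i)).
  by rewrite sumrB sumr_const card_ord -[_ *+ n]mulr_natr mulVf // pnatr_eq0 -lt0n.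
rewrite normrM ger0_norm ?invr_ge0 ?ler0n // mulrCA ler_wpM2l ?invr_ge0 ?ler0n //.
apply: le_trans (ler_norm_sum _ _ _) _.
apply: (@le_trans _ _ (\sum_g tree_weight g * `|\sum_j s (g p) j - 1|)).
  apply: le_trans (ler_sum_pred _ _) => [|g]; last by rewrite mulr_ge0 ?tree_weight_ge0.
  by apply: ler_sum => g _; rewrite normrM ger0_norm ?tree_weight_ge0.
rewrite (partition_big (fun g : {ffun 'I_k.+1 -> 'I_n} => g p) predT) //= mulr_sumr.
apply: ler_sum => i _; rewrite -row_sub1 mulrC.
rewrite (eq_bigr (fun g => tree_weight g * `|\sum_j s i j - 1|)) => [|g /eqP <-] //.
by rewrite -mulr_suml [leRHS]mulrC ler_wpM2r ?sum_tree_weight_at.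
Qed.

Lemma collision_bound k (p : 'I_k.+1) eps : 0 <= eps -> (forall i j, s i j <= eps) ->
  0 <= n%:R^-1 * \sum_(g : {ffun 'I_k.+1 -> 'I_n} | injectiveb g)
          tree_weight g * \sum_(j in codom g) s (g p) j
    <= C ^+ k * (k.+1%:R * eps).
Proof.
move=> eps_ge0 s_le; have keps_ge0 : 0 <= k.+1%:R * eps by rewrite mulr_ge0.
have codom_le g : injectiveb g -> \sum_(j in codom g) s (g p) j <= k.+1%:R * eps.
  move/injectiveP=> g_inj; apply: le_trans (ler_sum _ (fun j _ => s_le (g p) j)) _.
  by rewrite sumr_const card_codom // card_ord mulr_natl.
apply/andP; split.
  rewrite mulr_ge0 ?invr_ge0 // sumr_ge0 // => g _.
  by rewrite mulr_ge0 ?tree_weight_ge0 ?sumr_ge0.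
apply: le_trans (_ : _ <= n%:R^-1 * \sum_g tree_weight g * (k.+1%:R * eps)) _.
  rewrite ler_wpM2l ?invr_ge0 //; apply: le_trans (ler_sum_pred _ _) => [|g].
    by apply: ler_sum => g /codom_le; apply: ler_wpM2l; rewrite ?tree_weight_ge0.
  by rewrite mulr_ge0 ?tree_weight_ge0.
by rewrite -mulr_suml mulrA ler_wpM2r ?avg_tree_weight_le.
Qed.

End Bounds.
End TreeWeight.

Lemma cvg_avg_inj_tree_weight (R : realType) (s : forall n, 'I_n -> 'I_n -> R)
    (eps : nat -> R) (C : R) (par : nat -> nat) :
  (forall m, (0 < m)%N -> (par m < m)%N) ->
  (forall n i j, 0 <= s n i j) -> (forall n i j, s n i j = s n j i) ->
  (forall n i, \sum_j s n i j <= C) -> 0 <= C ->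
  (forall n i j, s n i j <= eps n) -> (forall n, 0 <= eps n) -> eps @ \oo --> (0 : R) ->
  (fun n => n%:R^-1 * \sum_(i < n) `| \sum_(j < n) (s n i j - n%:R^-1) |) @ \oo --> (0 : R) ->
  forall k, (fun n => n%:R^-1 * \sum_(g : {ffun 'I_k.+1 -> 'I_n} | injectiveb g)
                         tree_weight par (s n) g) @ \oo --> (1 : R).
Proof.
move=> par_lt s_ge0 s_sym row_le C_ge0 s_le eps_ge0 eps_cvg dev_cvg.
elim=> [|k IHk].
  apply: cvg_trans (near_eq_cvg _) (cvg_cst (1 : R)); near=> n.
  rewrite (eq_bigl predT) => [|g]; last by apply/injectiveP => x y _; rewrite !ord1.
  under eq_bigr => g _ do rewrite tree_weight1.
  rewrite sumr_const card_ffun !card_ord expn1 -[_ *+ n]mulr_natr mul1r mulVf //.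
  by rewrite pnatr_eq0 -lt0n; near: n; exists 1%N.
set dev := fun n => _ * \sum_(i < n) _ in dev_cvg.
set row_err := fun n => n%:R^-1 * \sum_(g : {ffun 'I_k.+1 -> 'I_n} | injectiveb g)
  tree_weight par (s n) g * (\sum_j s n (g (inord (par k.+1))) j - 1).
set collision := fun n => n%:R^-1 * \sum_(g : {ffun 'I_k.+1 -> 'I_n} | injectiveb g)
  tree_weight par (s n) g * \sum_(j in codom g) s n (g (inord (par k.+1))) j.
have row_err_cvg : row_err @ \oo --> (0 : R).
  apply: (@squeeze_cvgr _ _ _ _ (fun n => - (C ^+ k * dev n)) (fun n => C ^+ k * dev n)).
  - near=> n; rewrite -ler_norml /row_err /dev /=.
    exact: (row_deviation_bound par_lt (s_ge0 n) (s_sym n) (row_le n) C_ge0 (inord (par k.+1))).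
  - by rewrite -oppr0 -(mulr0 (C ^+ k)); apply: cvgN; apply: cvgMl_tmp.
  - by rewrite -(mulr0 (C ^+ k)); apply: cvgMl_tmp.
have collision_cvg : collision @ \oo --> (0 : R).
  apply: (@squeeze_cvgr _ _ _ _ (fun=> 0) (fun n => C ^+ k * (k.+1%:R * eps n))).
  - near=> n; rewrite /collision /=.
    exact: (collision_bound par_lt (s_ge0 n) (s_sym n) (row_le n) C_ge0 (inord (par k.+1))
      (eps_ge0 n) (s_le n)).
  - exact: cvg_cst.
  - by rewrite -(mulr0 (C ^+ k)) -(mulr0 k.+1%:R); do 2 apply: cvgMl_tmp.
have -> : (fun n => n%:R^-1 * \sum_(g : {ffun 'I_k.+2 -> 'I_n} | injectiveb g)
            tree_weight par (s n) g) =
    fun n => n%:R^-1 * \sum_(g : {ffun 'I_k.+1 -> 'I_n} | injectiveb g)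
            tree_weight par (s n) g + row_err n - collision n.
  by apply/funext => n; rewrite sum_inj_tree_weight_rcons // mulrBr mulrDr.
have := cvgB (cvgD IHk row_err_cvg) collision_cvg; rewrite addr0 subr0; exact.
Unshelve. all: by end_near.
Qed.

Section SearchOrder.
Variables (V : finType) (e : rel V) (x0 : V).
Hypotheses (e_sym : symmetric e) (e_conn : forall x y, connect e x y).
Hypothesis e_acyclic : forall c : seq V, (3 <= size c)%N -> ~ ucycle e c.

Definition induced_rel (S : seq V) : rel V := fun x y => [&& e x y, x \in S & y \in S].

Lemma induced_rel_sym S : symmetric (induced_rel S).
Proof. by move=> x y; rewrite /induced_rel e_sym [(x \in S) && _]andbC. Qed.

Lemma path_induced_rel_sub S x p : path (induced_rel S) x p -> {subset p <= S}.
Proof.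
elim: p x => [|y p IHp] x //= /andP[/and3P[_ _ yS] yp] z.
by rewrite inE => /predU1P[-> //|]; apply: IHp yp z.
Qed.

Lemma common_neighbour_outside S v u1 u2 :
  v \notin S -> u1 \in S -> connect (induced_rel S) u1 u2 -> e u1 v -> e u2 v -> u1 = u2.
Proof.
move=> vS u1S /connectP[p p_path ->] e1 e2; apply/eqP/negPn/negP => ne.
case: (shortenP p_path) e2 ne => p' p'_path p'_uniq _ e2 ne.
have p'S := path_induced_rel_sub p'_path.
have p'_e : path e u1 p' by apply: sub_path p'_path => x y /and3P[].
apply: (e_acyclic (c := v :: u1 :: p')).
  by case: p' {p'_path p'_uniq p'S p'_e} e2 ne => [|z p'] /=; rewrite ?eqxx.
rewrite /ucycle /= rcons_path p'_e e2 andbT e_sym e1 /=.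
move: p'_uniq => /= /andP[-> ->]; rewrite !andbT in_cons negb_or.
apply/andP; split; first by apply: contraNneq vS => ->.
by apply: contra vS => /p'S.
Qed.

Definition search_order (s : seq V) := forall i, (0 < i)%N -> (i < size s)%N ->
  exists2 j, (j < i)%N & e (nth x0 s j) (nth x0 s i).

Lemma mem_take_nth s k i : (i < size s)%N -> (i < k)%N -> nth x0 s i \in take k s.
Proof.
by move=> i_lt_s i_lt_k; rewrite -(nth_take x0 i_lt_k) mem_nth // size_take_min leq_min i_lt_k.
Qed.

Lemma search_order_connect s : search_order s ->
  forall i k, (i < size s)%N -> (i < k)%N ->
  connect (induced_rel (take k s)) (nth x0 s 0) (nth x0 s i).
Proof.
move=> s_search; elim/ltn_ind => -[|i] IHi k i_lt_s i_lt_k; first exact: connect0.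
have [j j_lt_i e_ji] := s_search i.+1 erefl i_lt_s.
have j_lt_s := ltn_trans j_lt_i i_lt_s.
have j_lt_k := ltn_trans j_lt_i i_lt_k.
apply: connect_trans (IHi j j_lt_i k j_lt_s j_lt_k) (connect1 _).
by rewrite /induced_rel e_ji !mem_take_nth.
Qed.

Lemma search_order_earlier_neighbour_unique s : uniq s -> search_order s ->
  forall i j j', (j < i)%N -> (j' < i)%N -> (i < size s)%N ->
  e (nth x0 s j) (nth x0 s i) -> e (nth x0 s j') (nth x0 s i) -> j = j'.
Proof.
move=> s_uniq s_search i j j' j_lt_i j'_lt_i i_lt_s e_ji e_j'i.
have j_lt_s := ltn_trans j_lt_i i_lt_s; have j'_lt_s := ltn_trans j'_lt_i i_lt_s.
apply/eqP; rewrite -(nth_uniq x0 j_lt_s j'_lt_s s_uniq); apply/eqP.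
apply: (common_neighbour_outside (S := take i s) _ _ _ e_ji e_j'i).
- by apply/negP => /index_ltn; rewrite index_uniq // ltnn.
- exact: mem_take_nth.
- apply: connect_trans (search_order_connect s_search j'_lt_s j'_lt_i).
  by rewrite (sym_connect_sym (induced_rel_sym _)) search_order_connect.
Qed.

Lemma exists_search_order m : (m < #|V|)%N ->
  exists s, [/\ uniq s, size s = m.+1 & search_order s].
Proof.
elim: m => [|m IHm] m_lt; first by exists [:: x0]; split => // -[].
have [s [s_uniq s_size s_search]] := IHm (ltnW m_lt).
have [u [v [u_s v_s e_uv]]] : exists u v, [/\ u \in s, v \notin s & e u v].
  case: (pickP [pred uv : V * V | [&& uv.1 \in s, uv.2 \notin s & e uv.1 uv.2]]).
    by move=> [u v] /and3P[u_s v_s e_uv]; exists u, v.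
  move=> no_exit; exfalso.
  have s_closed : closed_mem e (mem s).
    apply: intro_closed => [|x y e_xy x_s]; first exact: sym_connect_sym.
    by apply/negPn/negP => y_s; have /= := no_exit (x, y); rewrite x_s y_s e_xy.
  have s_full : mem s =i predT.
    move=> y; rewrite !inE -(closed_connect s_closed (e_conn (nth x0 s 0) y)).
    by rewrite mem_nth // s_size.
  by move: m_lt; rewrite cardT -(eq_cardT s_full) (card_uniqP s_uniq) s_size ltnn.
exists (rcons s v); split.
- by rewrite rcons_uniq v_s s_uniq.
- by rewrite size_rcons s_size.
- move=> i i_gt0; rewrite size_rcons ltnS leq_eqVlt => /predU1P[-> | i_lt_s].
    exists (index u s); first by rewrite index_mem.
    by rewrite !nth_rcons index_mem u_s nth_index // ltnn eqxx.
  have [j j_lt_i e_ji] := s_search i i_gt0 i_lt_s.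
  by exists j => //; rewrite !nth_rcons i_lt_s (ltn_trans j_lt_i i_lt_s).
Qed.

End SearchOrder.

Lemma tree_enumeration (V : finType) (e : rel V) : is_tree e ->
  exists k (sig : 'I_k.+1 -> V) (par : nat -> nat),
  [/\ bijective sig, forall m, (0 < m)%N -> (par m < m)%N,
      forall m : 'I_k.+1, (0 < m)%N -> e (sig (inord (par m))) (sig m)
    & forall q m : 'I_k.+1, (q < m)%N -> e (sig q) (sig m) -> q = par m :> nat].
Proof.
case=> V_gt0 e_sym _ e_conn e_acyclic; case/card_gt0P: (V_gt0) => x0 _.
set k := #|V|.-1; have card_V : #|V| = k.+1 by rewrite prednK.
have [s [s_uniq s_size s_search]] : exists s, [/\ uniq s, size s = k.+1 & search_order e x0 s].
  by apply: exists_search_order; rewrite ?card_V.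
(* Capping by i.-1 makes par m < m hold for every m > 0, even past the end of s. *)
pose par i := minn (find (e^~ (nth x0 s i)) s) i.-1.
have par_lt m : (0 < m)%N -> (par m < m)%N.
  by move=> m_gt0; rewrite (leq_ltn_trans (geq_minr _ _)) // prednK.
have par_edge m : (0 < m)%N -> (m < size s)%N -> e (nth x0 s (par m)) (nth x0 s m).
  move=> m_gt0 m_lt_s; have [j j_lt_m e_jm] := s_search m m_gt0 m_lt_s.
  have find_le : (find (e^~ (nth x0 s m)) s <= j)%N.
    by rewrite leqNgt; apply/negP => /(before_find x0); rewrite e_jm.
  rewrite /par (minn_idPl _); last by rewrite -ltnS prednK // (leq_ltn_trans find_le).
  apply: (nth_find x0 (a := e^~ (nth x0 s m))); apply/hasP.
  by exists (nth x0 s j); rewrite ?mem_nth ?(ltn_trans j_lt_m).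
have par_inord (m : 'I_k.+1) : (0 < m)%N -> (inord (par m) : 'I_k.+1) = par m :> nat.
  by move=> m_gt0; apply: inordK; exact: ltn_trans (par_lt m m_gt0) (ltn_ord m).
exists k, (fun i => nth x0 s i), par; split => //.
- apply: inj_card_bij; last by rewrite card_ord card_V.
  by move=> i j /eqP; rewrite nth_uniq ?s_size // => /eqP /val_inj.
- by move=> m m_gt0; rewrite par_inord // par_edge // s_size.
- move=> q m q_lt_m e_qm; have m_gt0 := leq_ltn_trans (leq0n q) q_lt_m.
  have m_lt_s : (m < size s)%N by rewrite s_size.
  apply: (search_order_earlier_neighbour_unique e_sym e_acyclic s_uniq s_search q_lt_m) => //.
  - exact: par_lt.
  - exact: par_edge.
Qed.

Section EdgeReindexing.
Variables (V : finType) (e : rel V).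
Hypotheses (e_sym : symmetric e) (e_irr : irreflexive e).

Definition edge_pair (a b : V) : V * V :=
  if (enum_rank a <= enum_rank b)%N then (a, b) else (b, a).

Lemma is_edge_pair a b : is_edge e (edge_pair a b) = e a b.
Proof.
rewrite /edge_pair /is_edge; case: ifP => /= le_ab; first by rewrite le_ab andbT.
by rewrite e_sym andbC ltnW // ltnNge le_ab.
Qed.

Lemma edge_pairC a b : a != b -> edge_pair a b = edge_pair b a.
Proof.
move=> neq_ab; rewrite /edge_pair; case: (ltngtP (enum_rank a) (enum_rank b)) => // /val_inj.
by move/enum_rank_inj/eqP; rewrite (negbTE neq_ab).
Qed.

Lemma edge_pair_edge a b : is_edge e (a, b) -> edge_pair a b = (a, b).
Proof. by case/andP=> _ le_ab; rewrite /edge_pair le_ab. Qed.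

Variables (k : nat) (sig : 'I_k.+1 -> V) (tau : V -> 'I_k.+1) (par : nat -> nat).
Hypotheses (sigK : cancel sig tau) (tauK : cancel tau sig).
Hypothesis par_lt : forall m, (0 < m)%N -> (par m < m)%N.
Hypothesis par_edge : forall m : 'I_k.+1, (0 < m)%N -> e (sig (inord (par m))) (sig m).
Hypothesis edge_par : forall q m : 'I_k.+1, (q < m)%N -> e (sig q) (sig m) -> q = par m :> nat.

Lemma Pweight_tree_weight (R : realType) n (S : 'I_n -> 'I_n -> R) :
  (forall i j, S i j = S j i) ->
  forall g : {ffun 'I_k.+1 -> 'I_n}, Pweight e S [ffun v => g (tau v)] = tree_weight par S g.
Proof.
move=> S_sym g; rewrite /Pweight /tree_weight.
pose edge_of (m : 'I_k.+1) := edge_pair (sig (inord (par m))) (sig m).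
pose later (p : V * V) : 'I_k.+1 := inord (maxn (tau p.1) (tau p.2)).
have edge_of_later p : is_edge e p -> edge_of (later p) = p.
  case: p => a b ab_edge; have e_ab : e a b by case/andP: ab_edge.
  have edge_of_lt (a' b' : V) :
      e a' b' -> (tau a' < tau b')%N -> edge_of (tau b') = edge_pair a' b'.
    move=> e_ab' lt_ab'; rewrite /edge_of tauK -(edge_par lt_ab') ?tauK //.
    by rewrite inord_val tauK.
  rewrite /later /=; case: (ltngtP (tau a) (tau b)) => [lt_ab|lt_ba|/val_inj eq_ab].
  - by rewrite inord_val (edge_of_lt a b) // edge_pair_edge.
  - rewrite inord_val (edge_of_lt b a) 1?e_sym // -edge_pairC ?edge_pair_edge //.
    by apply: contraTneq e_ab => ->; rewrite e_irr.
  - by move: e_ab; rewrite -(tauK a) eq_ab tauK e_irr.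
have edge_of_later_eq m :
    is_edge e (edge_of m) && (later (edge_of m) == m) = (0 < m)%N.
  rewrite /edge_of is_edge_pair; set q : 'I_k.+1 := inord (par m).
  have -> : later (edge_pair (sig q) (sig m)) = inord (maxn q m).
    by rewrite /later /edge_pair; case: ifP => _ /=; rewrite !sigK // maxnC.
  case: (posnP m) => [m0 | m_gt0].
    rewrite m0 maxn0 inord_val; apply/negbTE/andP => -[e_qm /eqP q_m].
    by move: e_qm; rewrite q_m e_irr.
  have q_lt_m : (q < m)%N by rewrite inordK ?par_lt // (ltn_trans (par_lt m_gt0)).
  by rewrite par_edge // (maxn_idPr (ltnW q_lt_m)) inord_val eqxx.
rewrite (reindex_onto edge_of later edge_of_later).
apply: eq_big => [m | m _]; first exact: edge_of_later_eq.
by rewrite /edge_of /edge_pair; case: ifP => _; rewrite /= !ffunE !sigK // S_sym.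
Qed.

Lemma sum_inj_Pweight (R : realType) n (S : 'I_n -> 'I_n -> R) :
  (forall i j, S i j = S j i) ->
  \sum_(F : {ffun V -> 'I_n} | injectiveb F) Pweight e S F =
  \sum_(g : {ffun 'I_k.+1 -> 'I_n} | injectiveb g) tree_weight par S g.
Proof.
move=> S_sym; rewrite (reindex (fun g : {ffun 'I_k.+1 -> 'I_n} => [ffun v => g (tau v)])).
  apply: eq_big => g; last by move=> _; apply: Pweight_tree_weight.
  apply/injectiveP/injectiveP => g_inj x y.
    by move=> gxy; rewrite -(sigK x) -(sigK y); congr tau; apply: g_inj; rewrite !ffunE !sigK.
  by rewrite !ffunE => /g_inj /(can_inj tauK).
exists (fun F : {ffun V -> 'I_n} => [ffun i => F (sig i)]) => [g _|F _];
  by apply/ffunP => x; rewrite !ffunE ?sigK ?tauK.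
Qed.

End EdgeReindexing.

Theorem lemma3p2 (R : realType)
  (d : nat -> measure_display) (T : forall n, measurableType (d n))
  (P : forall n, probability (T n) R)
  (re im : forall n, 'I_n -> 'I_n -> {RV (P n) >-> R})
  (eta : nat -> R) (C : R) :
  (* Hermitian: w_ji = conj w_ij *)
  (forall n (i j : 'I_n) t, re n j i t = re n i j t /\ im n j i t = - im n i j t) ->
  (* upper triangular entries jointly independent *)
  (forall n, mutually_independent (P n) [set ij : 'I_n * 'I_n | (ij.1 <= ij.2)%N]
               (fun ij t => (re n ij.1 ij.2 t, im n ij.1 ij.2 t))) ->
  (* mean zero *)
  (forall n (i j : 'I_n), ('E_(P n)[re n i j] = 0)%E /\ ('E_(P n)[im n i j] = 0)%E) ->
  (* uniformly small entries *)
  (forall n, 0 < eta n) -> eta @ \oo --> (0 : R) ->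
  (forall n (i j : 'I_n) t, absC (re n i j t) (im n i j t) <= eta n) ->
  (* bounded row sums of variances *)
  0 <= C ->
  (forall n (i : 'I_n), \sum_(j < n) varC (P n) (re n i j) (im n i j) <= C) ->
  (* averaged row sums of variances close to 1 *)
  (fun n => n%:R^-1 * \sum_(i < n)
      `| \sum_(j < n) (varC (P n) (re n i j) (im n i j) - n%:R^-1) |) @ \oo --> (0 : R) ->
  forall (V : finType) (e : rel V), is_tree e ->
  (fun n => n%:R^-1 * \sum_(F : {ffun V -> 'I_n} | @injections V n F)
      Pweight e (fun i j => varC (P n) (re n i j) (im n i j)) F) @ \oo --> (1 : R).
Proof.
move=> herm _ mean _ eta_cvg eta_bound C_ge0 row_le dev_cvg V e tree.
pose s n (i j : 'I_n) := varC (P n) (re n i j) (im n i j).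
have s_ge0_le n i j : 0 <= s n i j <= eta n ^+ 2.
  by have [? ?] := mean n i j; apply: varC_ge0_le.
have s_sym n i j : s n i j = s n j i.
  by have [? ?] := mean n i j; have [? ?] := mean n j i; apply: varC_conj.
have [k [sig [par [[tau sigK tauK] par_lt par_edge edge_par]]]] := tree_enumeration tree.
have [_ e_sym e_irr _ _] := tree.
rewrite /injections; under eq_fun => n do
  rewrite (sum_inj_Pweight e_sym e_irr sigK tauK par_lt par_edge edge_par (s_sym n)).
apply: (cvg_avg_inj_tree_weight (C := C) (eps := fun n => eta n ^+ 2) par_lt) => //.
- by move=> n i j; case/andP: (s_ge0_le n i j).
- by move=> n i j; case/andP: (s_ge0_le n i j).
- by move=> n; rewrite sqr_ge0.
- by rewrite -(mulr0 0); under eq_fun => n do rewrite expr2; apply: cvgM.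
Qed.
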